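(* Let $H$ be a dephased complex Hadamard matrix of order $6$. If some row of $H$ other than the first (respectively, some column other than the first) contains three entries equal to the same number $x$, then $x\in\{1,-1\}$ and that row (respectively column) is, up to permutation of its entries, equal to $(1,1,1,-1,-1,-1)$.
   Context: A complex Hadamard matrix of order $n$ is an $n\times n$ complex matrix $H$ all of whose entries have modulus $1$ and which satisfies $HH^\ast=nI_n$. It is dephased if all entries of its first row and first column equal $1$. *)

(* Complex numbers are modelled by an arbitrary
   numClosedFieldType C (e.g. algC). *)
From HB Require Import structures.
From mathcomp Require Import all_boot all_order all_algebra.
Set Implicit Arguments. Unset Strict Implicit. Unset Printing Implicit Defensive.
Import Order.TTheory GRing.Theory Num.Theory.
Local Open Scope ring_scope.

Definition adjmx (C : numClosedFieldType) (m n : nat) (H : 'M[C]_(m, n)) : 'M[C]_(n, m) :=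
  (map_mx Num.conj H)^T.

Definition complex_hadamard (C : numClosedFieldType) (n : nat) (H : 'M[C]_n) : Prop :=
  (forall i j, `|H i j| = 1) /\ H *m adjmx H = n%:R%:M.

Definition dephased (C : numClosedFieldType) (n : nat) (H : 'M[C]_n.+1) : Prop :=
  (forall j, H ord0 j = 1) /\ (forall i, H i ord0 = 1).

From HB Require Import structures.
From mathcomp Require Import all_boot all_order all_algebra.
From mathcomp Require Import ring zify.
Set Implicit Arguments.
Unset Strict Implicit.
Unset Printing Implicit Defensive.
Import Order.TTheory GRing.Theory Num.Theory.
Local Open Scope ring_scope.

(* Let f be a vector of n unimodular complex numbers with zero sum, and x a
   unimodular number.  Expanding |f_j + x|^2 = 2 + 2 Re(f_j conj x) and summing,
   the cross terms cancel, so  sum_j |f_j + x|^2 = 2n.  Every entry equal to x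
   contributes 4, hence x occurs at most n/2 times, and if it occurs exactly
   n/2 times every other summand vanishes, i.e. every other entry equals -x.

   In a dephased complex Hadamard matrix every row and every column other than
   the first is orthogonal to the all-ones first row (resp. column), so it
   sums to zero.  For order 6, a value x occurring three times in such a row
   or column therefore occurs exactly three times and the other three entries
   are -x; since the row contains the entry 1, x = 1 or x = -1, and the row is
   a permutation of (1,1,1,-1,-1,-1). *)

Lemma count_enum (T : finType) (A : pred T) : count A (enum T) = #|A|.
Proof.
rewrite cardE -size_filter; congr size.
by rewrite /(enum T) /(enum A) /= /enum_mem filter_predT.
Qed.

Lemma perm_two_valued (T : eqType) (s : seq T) (x z : T) :
  (forall y, y \in s -> y != x -> y = z) ->
  perm_eq s (nseq (count (pred1 x) s) x ++
             nseq (count (predC (pred1 x)) s) z).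
Proof.
move=> other_z.
have /all_pred1P eq_x : all (pred1 x) (filter (pred1 x) s).
  by apply/allP => y; rewrite mem_filter => /andP[].
have /all_pred1P eq_z : all (pred1 z) (filter (predC (pred1 x)) s).
  by apply/allP => y; rewrite mem_filter => /andP[ne_yx s_y]; apply/eqP/other_z.
by rewrite -(perm_filterC (pred1 x) s) eq_x eq_z !size_filter.
Qed.

Section UnimodularZeroSum.

Variables (C : numClosedFieldType) (n : nat) (f : 'I_n -> C) (x : C).
Hypothesis unimodular_f : forall j, `|f j| = 1.
Hypothesis zero_sum_f : \sum_j f j = 0.
Hypothesis unimodular_x : `|x| = 1.

Lemma sum_sqr_norm_add : \sum_j `|f j + x| ^+ 2 = (2 * n)%:R.
Proof.
have expand j : `|f j + x| ^+ 2 = 2 + (f j * x^* + x * (f j)^*).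
  have unit_f : f j * (f j)^* = 1 by rewrite -normCK unimodular_f expr1n.
  have unit_x : x * x^* = 1 by rewrite -normCK unimodular_x expr1n.
  rewrite normCK rmorphD /= mulrDl !mulrDr unit_f unit_x; ring.
rewrite (eq_bigr _ (fun j _ => expand j)) big_split /= sumr_const card_ord.
rewrite big_split /= -mulr_suml -mulr_sumr -rmorph_sum zero_sum_f rmorph0.
by rewrite mul0r mulr0 !addr0 natrM mulr_natr.
Qed.

Let x_entries := [pred j | f j == x].

Lemma sum_sqr_norm_split :
  (4 * #|x_entries|)%:R + \sum_(j | f j != x) `|f j + x| ^+ 2 = (2 * n)%:R :> C.
Proof.
rewrite -sum_sqr_norm_add [RHS](bigID (fun j => f j == x)) /=; congr (_ + _).
transitivity (\sum_(j | f j == x) (4 : C)).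
  by rewrite sumr_const natrM mulr_natr.
apply: eq_bigr => j /eqP ->.
by rewrite -mulr2n normrMn unimodular_x -natrX.
Qed.

Lemma card_eq_le_half : (2 * #|x_entries| <= n)%N.
Proof.
have rest_ge0 : 0 <= \sum_(j | f j != x) `|f j + x| ^+ 2 :> C.
  by apply: sumr_ge0 => j _; exact: exprn_ge0.
have : (4 * #|x_entries|)%:R <= (2 * n)%:R :> C.
  by rewrite -sum_sqr_norm_split lerDl.
by rewrite ler_nat; lia.
Qed.

Lemma others_opp_of_half :
  (2 * #|x_entries| = n)%N -> forall j, f j != x -> f j = - x.
Proof.
move=> half j ne_jx.
have rest0 : \sum_(j | f j != x) `|f j + x| ^+ 2 = 0 :> C.
  have := sum_sqr_norm_split; rewrite -[X in (2 * X)%N]half mulnA.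
  by rewrite -[X in _ = X]addr0 => /addrI.
apply/eqP; rewrite -addr_eq0 -normr_eq0 -sqrf_eq0; apply/eqP.
exact: (psumr_eq0P (fun i _ => exprn_ge0 2 (normr_ge0 _)) rest0 ne_jx).
Qed.

End UnimodularZeroSum.

Lemma zero_sum_half_constant (C : numClosedFieldType) (k : nat)
    (f : 'I_(2 * k) -> C) (x : C) :
  (forall j, `|f j| = 1) -> \sum_j f j = 0 -> (exists j, f j = 1) ->
  (k <= #|[pred j | f j == x]|)%N ->
  (x = 1 \/ x = -1) /\
  perm_eq [seq f j | j <- enum 'I_(2 * k)] (nseq k 1 ++ nseq k (-1)).
Proof.
move=> unimodular_f zero_sum [j1 f_j1] many_x.
have [j0 /eqP f_j0] : exists j, f j == x.
  have k_gt0 : (0 < k)%N by have := ltn_ord j1; lia.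
  have : (0 < #|[pred j | f j == x]|)%N by apply: leq_trans many_x.
  by case/card_gt0P => j; exists j.
have unimodular_x : `|x| = 1 by rewrite -f_j0.
have at_most_half := card_eq_le_half unimodular_f zero_sum unimodular_x.
have card_x : #|[pred j | f j == x]| = k by lia.
have opp_x j : f j != x -> f j = - x.
  by apply: (others_opp_of_half unimodular_f zero_sum unimodular_x); lia.
have x_pm1 : x = 1 \/ x = -1.
  have [<-|/opp_x] := eqVneq (f j1) x; first by left.
  by rewrite f_j1 => one_opp; right; rewrite one_opp opprK.
split=> //.
set s := [seq f j | j <- enum _].
have count_x : count (pred1 x) s = k by rewrite count_map count_enum.
have count_other : count (predC (pred1 x)) s = k.
  by have := count_predC (pred1 x) s; rewrite count_x size_map size_enum_ord; lia.
have perm_s : perm_eq s (nseq k x ++ nseq k (- x)).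
  rewrite -{1}count_x -{1}count_other; apply: perm_two_valued => y.
  by case/mapP=> j _ -> /opp_x.
case: x_pm1 => x_val; rewrite x_val ?opprK in perm_s; first exact: perm_s.
by rewrite (permPl perm_s) perm_catC.
Qed.

Section DephasedHadamard.

Variables (C : numClosedFieldType) (n : nat) (H : 'M[C]_n.+1).
Hypotheses (hadamard_H : complex_hadamard H) (dephased_H : dephased H).

(* A complex Hadamard matrix of order n+1 also satisfies H^* H = (n+1) I,
   since a one-sided inverse of a square matrix is two-sided. *)
Lemma adjmx_mul_hadamard : adjmx H *m H = n.+1%:R%:M.
Proof.
have n_neq0 : (n.+1%:R : C) != 0 by rewrite pnatr_eq0.
have inv : H *m ((n.+1%:R)^-1 *: adjmx H) = 1%:M.
  by rewrite -scalemxAr hadamard_H.2 scale_scalar_mx mulVf.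
have inv_left := mulmx1C inv; rewrite -scalemxAl in inv_left.
by rewrite -[LHS]scale1r -{1}(mulfV n_neq0) -scalerA inv_left scale_scalar_mx mulr1.
Qed.

(* Each row other than the first is orthogonal to the all-ones first row. *)
Lemma dephased_row_sum (i : 'I_n.+1) : i != ord0 -> \sum_j H i j = 0.
Proof.
move=> i_neq0; have := congr1 (fun M : 'M[C]_n.+1 => M i ord0) hadamard_H.2.
rewrite !mxE (negbTE i_neq0) mulr0n => orth; apply: etrans orth.
by apply: eq_bigr => j _; rewrite !mxE dephased_H.1 rmorph1 mulr1.
Qed.

(* Each column other than the first is orthogonal to the first column. *)
Lemma dephased_col_sum (j : 'I_n.+1) : j != ord0 -> \sum_i H i j = 0.
Proof.
move=> j_neq0; have := congr1 (fun M : 'M[C]_n.+1 => M ord0 j) adjmx_mul_hadamard.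
rewrite !mxE eq_sym (negbTE j_neq0) mulr0n => orth; apply: etrans orth.
by apply: eq_bigr => i _; rewrite !mxE dephased_H.2 rmorph1 mul1r.
Qed.

End DephasedHadamard.

Theorem lemma2p22 (C : numClosedFieldType) (H : 'M[C]_6) :
  complex_hadamard H -> dephased H ->
  (forall (i : 'I_6) (x : C), i != ord0 ->
     (3 <= #|[pred j | H i j == x]|)%N ->
     (x = 1 \/ x = -1) /\
     perm_eq [seq H i j | j <- enum 'I_6] [:: 1; 1; 1; -1; -1; -1]) /\
  (forall (j : 'I_6) (x : C), j != ord0 ->
     (3 <= #|[pred i | H i j == x]|)%N ->
     (x = 1 \/ x = -1) /\
     perm_eq [seq H i j | i <- enum 'I_6] [:: 1; 1; 1; -1; -1; -1]).
Proof.
move=> hadamard_H dephased_H.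
have [unimodular _] := hadamard_H; have [first_row first_col] := dephased_H.
split=> [i x i_neq0 | j x j_neq0].
- apply: (@zero_sum_half_constant C 3 (fun j => H i j)) => //.
  + exact: dephased_row_sum.
  + by exists ord0.
- apply: (@zero_sum_half_constant C 3 (fun i => H i j)) => //.
  + exact: dephased_col_sum.
  + by exists ord0.
Qed.
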